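(* Let $p,m\ge1$ be integers with $p+\frac m2>1$. Then the minimal operator $\mathbb{H}$ generated by the generalized Heun operator $H^{p,m}$ in $\mathbb{B}_p$ is completely indeterminate: its deficiency indices satisfy $n_+(\mathbb{H})=n_-(\mathbb{H})=m$.
   Context: $\mathbb{B}$ is the Bargmann space of entire functions $\varphi$ with $\frac1\pi\int_{\mathbb{C}}|\varphi|^2e^{-|z|^2}dxdy<\infty$, orthonormal basis $e_k(z)=z^k/\sqrt{k!}$. Annihilation and creation operators: $A\varphi=\varphi'$, $A^*\varphi=z\varphi$. The generalized Heun operator is $H^{p,m}=A^{*p}(A^m+A^{*m})A^p$, i.e. $H^{p,m}\varphi=z^p\varphi^{(p+m)}+z^{p+m}\varphi^{(p)}$; on the basis: $H^{p,m}e_k=0$ for $k<p$; $H^{p,m}e_k=\frac{\sqrt{k!(k+m)!}}{(k-p)!}e_{k+m}$ for $p\le k<p+m$; $H^{p,m}e_k=\frac{\sqrt{k!(k-m)!}}{(k-p-m)!}e_{k-m}+\frac{\sqrt{k!(k+m)!}}{(k-p)!}e_{k+m}$ for $k\ge p+m$. $\mathbb{B}_p=\{\varphi\in\mathbb{B}:\varphi(0)=\varphi'(0)=\dots=\varphi^{(p-1)}(0)=0\}$, the closed span of $\{e_k\}_{k\ge p}$. $\mathbb{H}$ is the closure in $\mathbb{B}_p$ of the restriction of $H^{p,m}$ to polynomials lying in $\mathbb{B}_p$; it is a closed symmetric operator. Deficiency indices: $n_\pm(\mathbb{H})=\dim\ker(\mathbb{H}^*\mp iI)$. A closed symmetric operator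 whose block Jacobi matrix has $m\times m$ blocks is called completely indeterminate if $n_+=n_-=m$. *)

From HB Require Import structures.
From mathcomp Require Import all_boot all_order all_algebra.
From mathcomp Require Import complex.
From mathcomp Require Import all_classical all_reals all_analysis.
From mathcomp Require Import Rstruct Rstruct_topology.
Set Implicit Arguments. Unset Strict Implicit. Unset Printing Implicit Defensive.
Import Order.TTheory GRing.Theory Num.Theory.
Local Open Scope ring_scope.
Local Open Scope complex_scope.

Notation Cx := (Rdefinitions.R[i]).

(* Vectors of B_p are represented by their coordinate sequences in the
   orthonormal basis e_k = z^k / sqrt(k!) of the Bargmann space:
   phi = sum_k x k * e_k.  The map phi |-> (x k)_k is the unitary
   isomorphism B ~ l^2(N). *)
Definition cseq := nat -> Cx.

Definition sqmod (z : Cx) : Rdefinitions.R := (complex.Re z) ^+ 2 + (complex.Im z) ^+ 2.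

Definition in_l2 (x : cseq) : Prop :=
  cvgn (series (fun k => sqmod (x k))).

(* x corresponds to an element of B_p = closed span {e_k : k >= p} *)
Definition in_Bp (p : nat) (x : cseq) : Prop :=
  in_l2 x /\ forall k, (k < p)%N -> x k = 0.

(* x corresponds to a polynomial (finitely many nonzero coordinates)
   lying in B_p; its coordinates vanish from index N on. *)
Definition poly_Bp (p N : nat) (x : cseq) : Prop :=
  (forall k, (k < p)%N -> x k = 0) /\ (forall k, (N <= k)%N -> x k = 0).

(* Coefficients of H^{p,m} on the basis:
   H e_k = hdown k e_{k-m} + hup k e_{k+m}  with
   hup k   = sqrt(k! (k+m)!) / (k-p)!      for k >= p      (0 otherwise),
   hdown k = sqrt(k! (k-m)!) / (k-p-m)!    for k >= p + m  (0 otherwise). *)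
Definition hup (p m k : nat) : Rdefinitions.R :=
  if (p <= k)%N then Num.sqrt ((k`! * (k + m)`!)%N%:R) / ((k - p)`!)%N%:R else 0.

Definition hdown (p m k : nat) : Rdefinitions.R :=
  if (p + m <= k)%N then Num.sqrt ((k`! * (k - m)`!)%N%:R) / ((k - p - m)`!)%N%:R
  else 0.

Definition Heun (p m : nat) (x : cseq) : cseq := fun j =>
  (if (m <= j)%N then (hup p m (j - m)%N)%:C * x (j - m)%N else 0)
  + (hdown p m (j + m)%N)%:C * x (j + m)%N.

Definition fdot (N : nat) (u v : cseq) : Cx :=
  \sum_(k < N) u k * (v k)^*.

(* Graph of the adjoint H* of the minimal operator (the closure in B_p of
   H^{p,m} restricted to the polynomials in B_p).  The adjoint of a densely
   defined operator coincides with the adjoint of its closure, so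
   (y, z) is in the graph of H* iff y, z are in B_p and
   <H x, y> = <x, z> for every polynomial x in B_p.  If x vanishes from
   index N on, then x and H x vanish from index N + m on, so both inner
   products are the finite sums below. *)
Definition adj_graph (p m : nat) (y z : cseq) : Prop :=
  in_Bp p y /\ in_Bp p z /\
  forall (N : nat) (x : cseq), poly_Bp p N x ->
    fdot (N + m)%N (Heun p m x) y = fdot (N + m)%N x z.

Definition adj_eigenspace (p m : nat) (lambda : Cx) : set cseq :=
  [set y | adj_graph p m y (fun k => lambda * y k)].

Definition has_dim (K : set cseq) (d : nat) : Prop :=
  exists v : 'I_d -> cseq,
    (forall i, K (v i)) /\
    (forall c : 'I_d -> Cx,
        (forall k, \sum_(i < d) c i * v i k = 0) -> forall i, c i = 0) /\
    (forall y, K y -> exists c : 'I_d -> Cx,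
        forall k, y k = \sum_(i < d) c i * v i k).

Definition n_plus (p m d : nat) : Prop := has_dim (adj_eigenspace p m 'i) d.
Definition n_minus (p m d : nat) : Prop := has_dim (adj_eigenspace p m (- 'i)) d.

From mathcomp Require Import all_boot all_order all_algebra.
From mathcomp Require Import complex.
From mathcomp Require Import all_classical all_reals all_analysis.
From mathcomp Require Import Rstruct Rstruct_topology.
From mathcomp Require Import ring lra zify.
Import Order.TTheory GRing.Theory Num.Theory numFieldNormedType.Exports.
Local Open Scope ring_scope.

(* An eigenvector y of the adjoint for the eigenvalue lam is a sequence vanishing
   below p that solves the three-term recurrence
     hup k * y (k + m) + hdown k * y (k - m) = lam * y k      (p <= k)
   (test the adjoint relation against the basis vectors e_k); conversely every
   square-summable solution is an eigenvector.  A solution is determined by its m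
   values y p, ..., y (p + m - 1), so the solutions form an m-dimensional space,
   and it remains to show that for |lam| = 1 all of them are square summable.
   With U k = hup k ^ 2 >= k ^ 3 and eps = 1 / (8 k), the recurrence gives
     |y (k + m)|^2 <= (1 + eps) U (k - m) / U k * |y (k - m)|^2
                      + (1 + 8 k) / U k * |y k|^2,
   and since U (k - m) / U k ~ 1 - (2 p + m) m / k with 2 p + m >= 3, the sequence
   n ^ (-5/4) satisfies the reverse inequality for large k.  Hence
   |y n|^2 = O(n ^ (-5/4)), which is summable. *)

Section Decay.
Context {R : realType}.

Definition root4 (n : nat) : R := Num.sqrt (Num.sqrt n%:R).

Lemma root4_ge0 n : 0 <= root4 n.
Proof. exact: sqrtr_ge0. Qed.

Lemma root4_gt0 {n} : (0 < n)%N -> 0 < root4 n.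
Proof. by move=> n_gt0; rewrite !sqrtr_gt0 ltr0n. Qed.

Lemma root4X4 n : root4 n ^+ 4 = n%:R.
Proof. by rewrite (exprM _ 2 2) !sqr_sqrtr ?sqrtr_ge0. Qed.

Definition decay (n : nat) : R := (n%:R * root4 n)^-1.

Lemma decay_ge0 n : 0 <= decay n.
Proof. by rewrite invr_ge0 mulr_ge0 ?root4_ge0. Qed.

Lemma decay_gt0 {n} : (0 < n)%N -> 0 < decay n.
Proof. by move=> n_gt0; rewrite invr_gt0 mulr_gt0 ?root4_gt0 ?ltr0n. Qed.

Lemma inv_pow5_le (x y : R) : 0 < x -> 0 < y -> y ^+ 4 = x ^+ 4 + 1 ->
  (y ^+ 5)^-1 <= 4 * (x^-1 - y^-1).
Proof.
move=> x_gt0 y_gt0 yx.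
have le_xy : x <= y by rewrite -(ler_pXn2r (n := 4)) ?nnegrE ?ltW // yx; lra.
have : 1 <= 4 * y ^+ 3 * (y - x).
  have E : (y - x) * (y ^+ 3 + y ^+ 2 * x + y * x ^+ 2 + x ^+ 3) = 1.
    by rewrite -[1](addKr (x ^+ 4)) -yx; ring.
  rewrite -{1}E -subr_ge0.
  have -> : 4 * y ^+ 3 * (y - x) - (y - x) * (y ^+ 3 + y ^+ 2 * x + y * x ^+ 2 + x ^+ 3)
      = (y - x) ^+ 2 * (3 * y ^+ 2 + 2 * x * y + x ^+ 2) by ring.
  by rewrite mulr_ge0 ?sqr_ge0 //; nra.
move=> h; rewrite -[_^-1]mul1r ler_pdivrMr ?exprn_gt0 //.
have -> : 4 * (x^-1 - y^-1) * y ^+ 5 = 4 * y ^+ 3 * (y - x) * (y / x).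
  by field; rewrite !gt_eqF.
have : 1 <= y / x by rewrite ler_pdivlMr // mul1r.
nra.
Qed.

Lemma decayS_le n : (0 < n)%N ->
  decay n.+1 <= 4 * ((root4 n)^-1 - (root4 n.+1)^-1).
Proof.
move=> n_gt0; rewrite /decay -root4X4 -exprSr.
by apply: inv_pow5_le; rewrite ?root4_gt0 // !root4X4 -natr1.
Qed.

Lemma cvgn_series_decay : cvgn (series decay).
Proof.
apply: nondecreasing_is_cvgn; first by apply: nondecreasing_series => k _ _; exact: decay_ge0.
have series0 : series decay 0 = 0 by rewrite /series /= big_geq.
have bound n : series decay n.+2 + 4 * (root4 n.+1)^-1 <= 5.
  elim: n => [|n IHn].
    by rewrite !seriesSr series0 /decay /root4 !sqrtr1 mul0r invr0 !mulr1 invr1; lra.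
  by rewrite seriesSr; have := @decayS_le n.+1 (ltn0Sn n); lra.
exists 5 => _ [[|[|n]] _ <-].
- by rewrite series0.
- by rewrite seriesSr series0 add0r /decay mul0r invr0.
- have := bound n; have : 0 <= (root4 n.+1)^-1 by rewrite invr_ge0 root4_ge0.
  lra.
Qed.

Lemma cvgn_series_le_decay (c : nat -> R) (C : R) (K : nat) :
  (forall n, 0 <= c n) -> 0 <= C -> (forall n, (K <= n)%N -> c n <= C * decay n) ->
  cvgn (series c).
Proof.
move=> c_ge0 C_ge0 le_c.
rewrite -(is_cvg_series_restrict K).
have -> : (fun n => \sum_(K <= k < n) c k) = series (fun k => if (K <= k)%N then c k else 0).
  by apply/funext => n; rewrite /series /= (@big_nat_widenl _ _ _ K 0) // big_mkcond.
apply: (@series_le_cvg R _ (C *: decay)); last exact: is_cvg_seriesZ cvgn_series_decay.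
- by move=> n; case: ifP.
- by move=> n; rewrite /= mulr_ge0 ?decay_ge0.
- by move=> n /=; case: ifP => [/le_c // | _]; rewrite mulr_ge0 ?decay_ge0.
Qed.

Lemma amgm4 {x y : R} : 0 <= x -> 0 <= y -> 4 * x ^+ 3 * y <= 3 * x ^+ 4 + y ^+ 4.
Proof.
move=> x_ge0 y_ge0; rewrite -subr_ge0.
have -> : 3 * x ^+ 4 + y ^+ 4 - 4 * x ^+ 3 * y
    = (y - x) ^+ 2 * (y ^+ 2 + 2 * x * y + 3 * x ^+ 2) by ring.
by rewrite mulr_ge0 ?sqr_ge0 //; nra.
Qed.

Lemma root4_step2 n : 2 * n%:R * root4 n.+2 <= (2 * n%:R + 1) * root4 n.
Proof.
set x := root4 n; set y := root4 n.+2.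
have x_ge0 : 0 <= x := root4_ge0 n.
have yx : y ^+ 4 = x ^+ 4 + 2 by rewrite !root4X4 -addn2 natrD.
have := ler_wpM2l x_ge0 (amgm4 x_ge0 (root4_ge0 n.+2) : 4 * x ^+ 3 * y <= _).
have -> : x * (3 * x ^+ 4 + y ^+ 4) = 4 * x ^+ 5 + 2 * x by rewrite yx; ring.
rewrite -(root4X4 n) -/x; nra.
Qed.

Lemma decay_step2 n : (0 < n)%N ->
  2 * n%:R ^+ 2 * decay n <= (n%:R + 2) * (2 * n%:R + 1) * decay n.+2.
Proof.
move=> n_gt0; have x_gt0 := root4_gt0 n_gt0.
have y_gt0 : 0 < root4 n.+2 by exact: root4_gt0.
have n0 : (0 : R) < n%:R by rewrite ltr0n.
rewrite /decay -[n.+2%:R]natr1 -[n.+1%:R]natr1.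
have -> : 2 * n%:R ^+ 2 * (n%:R * root4 n)^-1 = 2 * n%:R / root4 n.
  by field; rewrite !gt_eqF.
have -> : (n%:R + 2) * (2 * n%:R + 1) * ((n%:R + 1 + 1) * root4 n.+2)^-1
    = (2 * n%:R + 1) / root4 n.+2.
  by field; rewrite !gt_eqF //; lra.
by rewrite ler_pdivrMr // mulrAC ler_pdivlMr // root4_step2.
Qed.

Lemma decay_shift {m k} : (m <= k)%N -> decay k <= 4 * decay (k + m).
Proof.
move=> le_mk; have [->|k_gt0] := posnP k.
  by rewrite /decay mul0r invr0 mulr_ge0 ?decay_ge0.
have r_gt0 := root4_gt0 k_gt0.
have mk : (m%:R : R) <= k%:R by rewrite ler_nat.
have le_r : root4 (k + m) <= 2 * root4 k.
  rewrite -(ler_pXn2r (n := 4)) ?nnegrE ?root4_ge0 ?mulr_ge0 ?root4_ge0 //.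
  have e16 : (2 : R) ^+ 4 = 16 by rewrite -natrX.
  by rewrite exprMn !root4X4 natrD e16; have := ler0n R k; lra.
have le_km : (k + m)%N%:R <= 2 * k%:R :> R by rewrite natrD; lra.
have a_gt0 : 0 < k%:R * root4 k by rewrite mulr_gt0 ?ltr0n.
have b_gt0 : 0 < (k + m)%:R * root4 (k + m).
  by rewrite mulr_gt0 ?root4_gt0 ?ltr0n ?addn_gt0 ?k_gt0.
rewrite /decay -[4 * _]invf_div lef_pV2 ?posrE ?divr_gt0 // ler_pdivrMr //.
have := ler_pM (ler0n _ _) (root4_ge0 _) le_km le_r; lra.
Qed.
End Decay.

Section Supersolution.
Context {R : numFieldType}.

Lemma le_supersolution {c W a b : nat -> R} {m K : nat} : (0 < m)%N ->
  (forall n, 0 <= c n) -> (forall n, (K <= n)%N -> 0 < W n) ->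
  (forall k, (K + m <= k)%N -> [/\ 0 <= a k, 0 <= b k,
      c (k + m)%N <= a k * c (k - m)%N + b k * c k &
      a k * W (k - m)%N + b k * W k <= W (k + m)%N]) ->
  exists2 C, 0 <= C & forall n, (K <= n)%N -> c n <= C * W n.
Proof.
move=> m_gt0 c_ge0 W_gt0 step.
pose F i := if (K <= i)%N then c i / W i else 0.
have F_ge0 i : 0 <= F i.
  by rewrite /F; case: ifP => // /W_gt0/ltW W_ge0; rewrite divr_ge0.
have C_ge0 : 0 <= \sum_(i < K + 2 * m) F i by exact: sumr_ge0.
exists (\sum_(i < K + 2 * m) F i) => //.
set C := \sum_(i < _) _ in C_ge0 *.
suff le_c N n : (n < N)%N -> (K <= n)%N -> c n <= C * W n by move=> n; apply: (le_c n.+1).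
elim: N n => [//|N IHN] n ltnN Kn.
have W_gt0n := W_gt0 n Kn.
have [small | large] := ltnP n (K + 2 * m).
  have -> : c n = F n * W n by rewrite /F Kn divfK ?gt_eqF.
  apply: ler_wpM2r; first exact: ltW.
  by rewrite /C (bigD1 (Ordinal small)) //= lerDl sumr_ge0.
have -> : n = ((n - m) + m)%N by lia.
have [a_ge0 b_ge0 le_c le_W] := step (n - m)%N ltac:(lia).
apply: le_trans le_c _; apply: le_trans (ler_wpM2l C_ge0 le_W); rewrite mulrDr.
by apply: lerD; rewrite mulrCA; apply: ler_wpM2l => //; apply: IHN; lia.
Qed.

End Supersolution.

Section Inequalities.
Context {R : realFieldType}.

Lemma sqr_ratio_le {A P M : R} : 0 <= P -> P <= A - 1 -> 1 <= M ->
  P ^+ 2 * (A + 1) <= (A - 1) ^+ 2 * (A + M).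
Proof.
move=> P_ge0 le_PA M_ge1.
by apply: ler_pM; rewrite ?sqr_ge0 ?lerXn2r ?nnegrE //; lra.
Qed.

Lemma decay_ratio_le {A N : R} : 2 <= A -> A <= N + 2 ->
  (A - 2) ^+ 2 * ((N + 2) * (2 * N + 1)) <= N ^+ 2 * (A * (2 * A - 3)).
Proof.
move=> A_ge2 le_AN; rewrite -subr_ge0.
have -> : N ^+ 2 * (A * (2 * A - 3)) - (A - 2) ^+ 2 * ((N + 2) * (2 * N + 1))
   = (N + 2 - A) * ((5 * A - 8) * (N + 2 - A) + (5 * A - 6) * (A - 2)) by ring.
by apply: mulr_ge0; [lra | apply: addr_ge0; apply: mulr_ge0; lra].
Qed.

Lemma unit_ratio_le {A : R} : 12 <= A ->
  4 * A * (A - 1) ^+ 2 * (2 * A - 3) <= 2 * (4 * A - 1) * (A - 2) ^+ 2 * (A + 1).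
Proof.
move=> A_ge12; rewrite -subr_ge0.
have -> : 2 * (4 * A - 1) * (A - 2) ^+ 2 * (A + 1) - 4 * A * (A - 1) ^+ 2 * (2 * A - 3)
  = 2 * (A - 12) ^+ 3 + 46 * (A - 12) ^+ 2 + 284 * (A - 12) + 232 by ring.
have d_ge0 : 0 <= A - 12 by lra.
have := exprn_ge0 2 d_ge0; have := exprn_ge0 3 d_ge0; lra.
Qed.

(* Read as P^2 / (A (A + M)) * (N + 2) (2 N + 1) / (2 N^2) <= 1 - 1 / (4 A): the
   first ratio is bounded by [sqr_ratio_le], the second decreases in N and is
   bounded by its value at N = A - 2 ([decay_ratio_le]), and [unit_ratio_le]
   bounds the product of the two bounds. *)
Lemma unit_step_poly_le (A P M N : R) :
  12 <= A -> A <= N + 2 -> 0 <= P -> P <= A - 1 -> 1 <= M ->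
  4 * A * P ^+ 2 * ((N + 2) * (2 * N + 1)) <= (4 * A - 1) * (2 * N ^+ 2) * (A * (A + M)).
Proof.
move=> A_ge12 le_AN P_ge0 le_PA M_ge1.
have Q_gt0 : 0 < (A + 1) * (A - 2) ^+ 2 by rewrite mulr_gt0 ?exprn_gt0 //; lra.
rewrite -(ler_pM2r Q_gt0).
have A_ge2 : 2 <= A by lra.
have X1_ge0 : 0 <= P ^+ 2 * (A + 1) by apply: mulr_ge0; [exact: sqr_ge0 | lra].
have X2_ge0 : 0 <= (A - 2) ^+ 2 * ((N + 2) * (2 * N + 1)).
  by apply: mulr_ge0; [exact: sqr_ge0 | apply: mulr_ge0; lra].
have W_ge0 : 0 <= (A + M) * N ^+ 2 * A.
  by apply: mulr_ge0; [apply: mulr_ge0; [lra | exact: sqr_ge0] | lra].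
have le12 := ler_pM X1_ge0 X2_ge0 (sqr_ratio_le P_ge0 le_PA M_ge1) (decay_ratio_le A_ge2 le_AN).
have -> : 4 * A * P ^+ 2 * ((N + 2) * (2 * N + 1)) * ((A + 1) * (A - 2) ^+ 2)
    = 4 * A * (P ^+ 2 * (A + 1) * ((A - 2) ^+ 2 * ((N + 2) * (2 * N + 1)))) by ring.
have -> : (4 * A - 1) * (2 * N ^+ 2) * (A * (A + M)) * ((A + 1) * (A - 2) ^+ 2)
    = (A + M) * N ^+ 2 * A * (2 * (4 * A - 1) * (A - 2) ^+ 2 * (A + 1)) by ring.
have A4_ge0 : 0 <= 4 * A by lra.
apply: le_trans (ler_wpM2l A4_ge0 le12) _.
have -> : 4 * A * ((A - 1) ^+ 2 * (A + M) * (N ^+ 2 * (A * (2 * A - 3))))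
    = (A + M) * N ^+ 2 * A * (4 * A * (A - 1) ^+ 2 * (2 * A - 3)) by ring.
by apply: ler_wpM2l; last exact: unit_ratio_le.
Qed.

Lemma unit_step_le (A P M N X Y v w : R) :
  12 <= A -> A <= N + 2 -> 0 <= P -> P <= A - 1 -> 1 <= M -> 1 <= N ->
  0 <= Y -> 0 <= w -> X * (A * (A + M)) = P ^+ 2 * Y ->
  2 * N ^+ 2 * v <= (N + 2) * (2 * N + 1) * w ->
  X * v <= (1 - (4 * A)^-1) * (Y * w).
Proof.
move=> A_ge12 le_AN P_ge0 le_PA M_ge1 N_ge1 Y_ge0 w_ge0 eX le_v.
have D_gt0 : 0 < 4 * A * (A * (A + M)) * (2 * N ^+ 2).
  by rewrite !mulr_gt0 ?exprn_gt0 //; lra.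
rewrite -(ler_pM2r D_gt0).
have -> : X * v * (4 * A * (A * (A + M)) * (2 * N ^+ 2))
    = 4 * A * P ^+ 2 * Y * (2 * N ^+ 2 * v) by rewrite -mulrA -[_ * Y]mulrA -eX; ring.
have YP_ge0 : 0 <= 4 * A * P ^+ 2 * Y by rewrite mulr_ge0 // mulr_ge0 ?sqr_ge0 //; lra.
apply: le_trans (ler_wpM2l YP_ge0 le_v) _.
have -> : (1 - (4 * A)^-1) * (Y * w) * (4 * A * (A * (A + M)) * (2 * N ^+ 2))
    = Y * w * ((4 * A - 1) * (2 * N ^+ 2) * (A * (A + M))) by field; lra.
have -> : 4 * A * P ^+ 2 * Y * ((N + 2) * (2 * N + 1) * w)
    = Y * w * (4 * A * P ^+ 2 * ((N + 2) * (2 * N + 1))) by ring.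
by apply: ler_wpM2l; [exact: mulr_ge0 | exact: unit_step_poly_le].
Qed.

Lemma sqrD_le {d : R} : 0 < d -> forall x y : R,
  (x + y) ^+ 2 <= (1 + d) * x ^+ 2 + (1 + d^-1) * y ^+ 2.
Proof.
move=> d_gt0 x y; rewrite -subr_ge0.
have -> : (1 + d) * x ^+ 2 + (1 + d^-1) * y ^+ 2 - (x + y) ^+ 2 = d^-1 * (d * x - y) ^+ 2.
  by field; rewrite gt_eqF.
by rewrite mulr_ge0 ?sqr_ge0 // invr_ge0 ltW.
Qed.

End Inequalities.

Local Notation R := Rdefinitions.R.
Local Open Scope complex_scope.

Lemma sqmod_ge0 (z : Cx) : 0 <= sqmod z.
Proof. by rewrite addr_ge0 ?sqr_ge0. Qed.

Lemma sqmodM (z w : Cx) : sqmod (z * w) = sqmod z * sqmod w.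
Proof. by case: z => a b; case: w => c d; rewrite /sqmod /=; ring. Qed.

Lemma sqmodN (z : Cx) : sqmod (- z) = sqmod z.
Proof. by case: z => a b; rewrite /sqmod /= !sqrrN. Qed.

Lemma sqmodR (r : R) : sqmod r%:C = r ^+ 2.
Proof. by rewrite /sqmod /= expr0n addr0. Qed.

Lemma sqmod_i : sqmod 'i = 1.
Proof. by rewrite /sqmod /= expr0n add0r expr1n. Qed.

Lemma sqmodD_le {d : R} : 0 < d -> forall z w : Cx,
  sqmod (z + w) <= (1 + d) * sqmod z + (1 + d^-1) * sqmod w.
Proof.
move=> d_gt0 [a b] [c e]; rewrite /sqmod /=.
by have := sqrD_le d_gt0 a c; have := sqrD_le d_gt0 b e; lra.
Qed.

Lemma big_nat_vanish_ge {V : nmodType} {F : nat -> V} {N M : nat} : (N <= M)%N ->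
  (forall k, (N <= k)%N -> F k = 0) -> \sum_(0 <= k < M) F k = \sum_(0 <= k < N) F k.
Proof.
move=> le_NM F0; rewrite (big_cat_nat (leq0n N) le_NM) /= [X in _ + X]big1_seq ?addr0 //.
by move=> k /andP[_]; rewrite mem_index_iota => /andP[le_Nk _]; apply: F0.
Qed.

Lemma big_nat_shift_vanish {V : nmodType} (F : nat -> V) (a N : nat) :
  (forall k, (k < a)%N -> F k = 0) ->
  \sum_(0 <= j < N) F (j + a)%N = \sum_(0 <= k < N + a) F k.
Proof.
move=> F0; rewrite (big_cat_nat (leq0n a) (leq_addl N a)) /= [X in _ = X + _]big1_seq ?add0r.
  by rewrite -{2}[a]add0n big_addn addnK.
by move=> k /andP[_]; rewrite mem_index_iota => /andP[_ lt_ka]; apply: F0.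
Qed.

Lemma big_nat_delta {V : pzRingType} (F : nat -> V) k N : (k < N)%N ->
  \sum_(0 <= j < N) (j == k)%:R * F j = F k.
Proof.
move=> lt_kN; rewrite (eq_bigr (fun j => if j == k then F j else 0)) => [|j _].
  by rewrite -big_mkcond big_nat1_eq lt_kN.
by rewrite mulr_natl mulrb.
Qed.

Lemma big_ord_delta {V : pzRingType} n (c : 'I_n -> V) (i : 'I_n) :
  \sum_(j < n) c j * (i == j)%:R = c i.
Proof.
rewrite (eq_bigr (fun j => if j == i then c j else 0)) => [|j _].
  by rewrite -big_mkcond big_pred1_eq.
by rewrite eq_sym mulr_natr mulrb.
Qed.

Lemma conjcD (z w : Cx) : Num.conj (z + w) = Num.conj z + Num.conj w.
Proof. exact: rmorphD. Qed.

Lemma conjc_realM (r : R) (z : Cx) : Num.conj (r%:C * z) = r%:C * Num.conj z.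
Proof. by rewrite rmorphM; congr (_ * _); apply/eqP; rewrite eq_complex /= oppr0 !eqxx. Qed.

Lemma fdotE N (u v : cseq) : fdot N u v = \sum_(0 <= k < N) u k * Num.conj (v k).
Proof. by rewrite /fdot -(big_mkord xpredT (fun k => u k * Num.conj (v k))). Qed.

Section Heun.
Variables p m : nat.
Hypotheses (p_gt0 : (0 < p)%N) (m_gt0 : (0 < m)%N).

Definition hupsq (k : nat) : R := (k`! * (k + m)`!)%N%:R / ((k - p)`!)%N%:R ^+ 2.

Lemma hupsq_gt0 k : 0 < hupsq k.
Proof. by rewrite divr_gt0 ?exprn_gt0 ?ltr0n ?muln_gt0 ?fact_gt0. Qed.

Lemma hupsqS b : (p <= b)%N ->
  hupsq b * (b.+1%:R * (b.+1 + m)%N%:R) = (b.+1 - p)%N%:R ^+ 2 * hupsq b.+1.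
Proof.
move=> le_pb.
rewrite /hupsq subSn // addSn !factS !natrM.
have f_neq0 : ((b - p)`!)%N%:R != 0 :> R by rewrite pnatr_eq0 -lt0n fact_gt0.
by field; rewrite f_neq0 addrC natr1 pnatr_eq0.
Qed.

Lemma cube_le_hupsq k : (p <= k)%N -> k%:R ^+ 3 <= hupsq k.
Proof.
move=> le_pk.
rewrite /hupsq ler_pdivlMr ?exprn_gt0 ?ltr0n ?fact_gt0 // -!natrX -natrM ler_nat.
have le1 : (k * (k - p)`! <= k`!)%N.
  by case: k le_pk => [|k] le_pk; rewrite ?muln0 // factS leq_mul2l leq_fact ?orbT //; lia.
have le2 : (k * k`! <= (k + m)`!)%N.
  apply: leq_trans (leq_fact (_ : k.+1 <= k + m)%N); last lia.
  by rewrite factS leq_mul2r leqnSn orbT.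
have le3 := leq_mul le1 le1.
have le4 : (k * (k`! * k`!) <= k`! * (k + m)`!)%N by rewrite mulnCA leq_mul2l le2 orbT.
apply: leq_trans le4.
have -> : (k ^ 3 * (k - p)`! ^ 2 = k * (k * (k - p)`! * (k * (k - p)`!)))%N by ring.
by rewrite leq_mul2l le3 orbT.
Qed.

Lemma hupsq_decay_step b n : (p <= b)%N -> (11 <= b)%N -> (b <= n.+1)%N ->
  hupsq b * decay n <= (1 - (4 * b.+1%:R)^-1) * (hupsq b.+1 * decay n.+2).
Proof.
move=> le_pb b_ge11 le_bn.
have n_gt0 : (0 < n)%N by lia.
apply: (@unit_step_le _ _ (b.+1 - p)%N%:R m%:R n%:R).
- by rewrite ler_nat.
- by rewrite -natrD ler_nat; lia.
- by [].
- by rewrite lerBrDr natr1 ler_nat; lia.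
- by rewrite ler1n.
- by rewrite ler1n.
- exact/ltW/hupsq_gt0.
- exact: decay_ge0.
- by rewrite -natrD addSn hupsqS.
- exact: decay_step2.
Qed.

(* m unit steps of [hupsq] paired with m double steps of [decay]. *)
Lemma hupsq_decay_shift k : (p + m + 12 <= k)%N ->
  hupsq (k - m) * decay (k - m) <= (1 - (4 * k%:R)^-1) * (hupsq k * decay (k + m)).
Proof.
move=> k_large.
suff chain i : (i < m)%N -> hupsq (k - i.+1) * decay (k + m - 2 * i.+1)
    <= (1 - (4 * k%:R)^-1) * (hupsq k * decay (k + m)).
  have e : (k + m - 2 * m.-1.+1 = k - m)%N by lia.
  by have := chain m.-1; rewrite prednK // in e *; rewrite e; apply; lia.
elim: i => [|i IHi] lt_im.
  have e1 : (k - 1).+1 = k by lia.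
  have e2 : (k + m - 2).+2 = (k + m)%N by lia.
  have := @hupsq_decay_step (k - 1) (k + m - 2) ltac:(lia) ltac:(lia) ltac:(lia).
  by rewrite e1 e2.
have e1 : (k - i.+2).+1 = (k - i.+1)%N by lia.
have e2 : (k + m - 2 * i.+2).+2 = (k + m - 2 * i.+1)%N by lia.
have := @hupsq_decay_step (k - i.+2) (k + m - 2 * i.+2) ltac:(lia) ltac:(lia) ltac:(lia).
rewrite e1 e2 => /le_trans; apply; apply: le_trans (IHi (ltnW lt_im)).
apply: ler_piMl; first by rewrite mulr_ge0 ?decay_ge0 ?ltW ?hupsq_gt0.
by rewrite lerBlDr lerDl invr_ge0 mulr_ge0.
Qed.

Definition far_coef k : R := (1 + (8 * k%:R)^-1) / hupsq k * hupsq (k - m).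

Definition near_coef k : R := (1 + 8 * k%:R) / hupsq k.

Lemma far_coef_ge0 k : 0 <= far_coef k.
Proof.
by rewrite /far_coef mulr_ge0 ?divr_ge0 ?ltW ?hupsq_gt0 // addr_ge0 ?invr_ge0 ?mulr_ge0.
Qed.

Lemma near_coef_ge0 k : 0 <= near_coef k.
Proof. by rewrite divr_ge0 ?ltW ?hupsq_gt0 // addr_ge0 ?mulr_ge0 ?ler0n. Qed.

Lemma far_coef_decay k : (p + m + 12 <= k)%N ->
  far_coef k * decay (k - m) <= (1 - (8 * k%:R)^-1) * decay (k + m).
Proof.
move=> k_large.
have U_gt0 := hupsq_gt0 k.
have k_gt0 : (0 : R) < k%:R by rewrite ltr0n; lia.
set e := (8 * k%:R)^-1.
have e_ge0 : 0 <= e by rewrite invr_ge0 mulr_ge0 // ltW.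
have c_ge0 : 0 <= (1 + e) / hupsq k by rewrite divr_ge0 ?ltW //; lra.
have -> : far_coef k * decay (k - m) = (1 + e) / hupsq k * (hupsq (k - m) * decay (k - m)).
  by rewrite /far_coef -/e; ring.
apply: le_trans (ler_wpM2l c_ge0 (hupsq_decay_shift _ k_large)) _.
have -> : (1 + e) / hupsq k * ((1 - (4 * k%:R)^-1) * (hupsq k * decay (k + m)))
    = (1 + e) * (1 - 2 * e) * decay (k + m).
  by rewrite /e; field; rewrite !gt_eqF.
by apply: ler_wpM2r; [exact: decay_ge0 | nra].
Qed.

Lemma near_coef_decay k : (p + m + 300 <= k)%N ->
  near_coef k * decay k <= (8 * k%:R)^-1 * decay (k + m).
Proof.
move=> k_large.
have U_gt0 := hupsq_gt0 k.
have K_ge : (300 : R) <= k%:R by rewrite ler_nat; lia.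
have le_c : near_coef k * 4 <= (8 * k%:R)^-1.
  rewrite /near_coef mulrAC ler_pdivrMr //.
  apply: le_trans (_ : _ <= (8 * k%:R)^-1 * k%:R ^+ 3) _.
    have -> : (8 * k%:R)^-1 * k%:R ^+ 3 = k%:R ^+ 2 / 8 :> R.
      by field; rewrite gt_eqF //; lra.
    rewrite ler_pdivlMr //.
    have : 300 * k%:R <= k%:R ^+ 2 :> R by rewrite expr2 ler_wpM2r //; lra.
    lra.
  by apply: ler_wpM2l; [rewrite invr_ge0; lra | apply: cube_le_hupsq; lia].
have c_ge0 : 0 <= near_coef k by rewrite divr_ge0 ?ltW //; lra.
have le_mk : (m <= k)%N by lia.
apply: le_trans (ler_wpM2l c_ge0 (decay_shift le_mk)) _.
by rewrite mulrA; apply: ler_wpM2r; [exact: decay_ge0 | exact: le_c].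
Qed.

Lemma hup_gt0 k : (p <= k)%N -> 0 < hup p m k.
Proof. by move=> le_pk; rewrite /hup le_pk divr_gt0 ?sqrtr_gt0 ?ltr0n ?muln_gt0 ?fact_gt0. Qed.

Lemma hup_sqr k : (p <= k)%N -> hup p m k ^+ 2 = hupsq k.
Proof. by move=> le_pk; rewrite /hup le_pk expr_div_n sqr_sqrtr ?ler0n. Qed.

Lemma hdownE k : (p + m <= k)%N -> hdown p m k = hup p m (k - m).
Proof.
move=> le_k; rewrite /hdown /hup le_k.
have -> : (p <= k - m)%N by lia.
have -> : (k - m + m = k)%N by lia.
have -> : (k - p - m = k - m - p)%N by lia.
by rewrite mulnC.
Qed.

Lemma hdown0 k : (k < p + m)%N -> hdown p m k = 0.
Proof. by move=> lt_k; rewrite /hdown leqNgt lt_k. Qed.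

Definition heun_rec (lam : Cx) (y : cseq) : Prop :=
  (forall k, (k < p)%N -> y k = 0) /\
  (forall k, (p <= k)%N ->
     (hup p m k)%:C * y (k + m)%N + (hdown p m k)%:C * y (k - m)%N = lam * y k).

Lemma heun_rec_sqmod_le {lam y} k : sqmod lam = 1 -> heun_rec lam y -> (p + m <= k)%N ->
  sqmod (y (k + m)%N) <=
    far_coef k * sqmod (y (k - m)%N) + near_coef k * sqmod (y k).
Proof.
move=> lam1 [_ rec] le_k.
have le_pk : (p <= k)%N by lia.
have le_pkm : (p <= k - m)%N by lia.
have U_gt0 := hupsq_gt0 k.
have k_gt0 : (0 : R) < k%:R by rewrite ltr0n; lia.
have e_gt0 : (0 : R) < (8 * k%:R)^-1 by rewrite invr_gt0 mulr_gt0.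
have := sqmodD_le e_gt0 ((- hup p m (k - m))%:C * y (k - m)%N) (lam * y k).
have <- : (hup p m k)%:C * y (k + m)%N = (- hup p m (k - m))%:C * y (k - m)%N + lam * y k.
  by rewrite -(rec k le_pk) hdownE // raddfN /= mulNr addrC addrK.
rewrite !sqmodM !sqmodR lam1 mul1r sqrrN invrK !hup_sqr //.
move/le_trans; rewrite -(ler_pM2l U_gt0); apply.
rewrite /far_coef /near_coef le_eqVlt; apply/orP; left; apply/eqP; field.
by rewrite !gt_eqF.
Qed.

Lemma heun_rec_l2 {lam y} : sqmod lam = 1 -> heun_rec lam y -> in_l2 y.
Proof.
move=> lam1 rec_y.
have W_gt0 n : (p + 300 <= n)%N -> 0 < decay n :> R by move=> le_n; apply: decay_gt0; lia.
have step k : (p + 300 + m <= k)%N -> [/\ 0 <= far_coef k, 0 <= near_coef k,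
    sqmod (y (k + m)%N) <= far_coef k * sqmod (y (k - m)%N) + near_coef k * sqmod (y k)
    & far_coef k * decay (k - m) + near_coef k * decay k <= decay (k + m)].
  move=> k_large; split; [exact: far_coef_ge0 | exact: near_coef_ge0 | |].
  - by apply: (heun_rec_sqmod_le k lam1 rec_y); lia.
  - have := @far_coef_decay k ltac:(lia).
    have := @near_coef_decay k ltac:(lia).
    lra.
have [C C_ge0 le_C] := le_supersolution m_gt0 (fun n => sqmod_ge0 (y n)) W_gt0 step.
exact: cvgn_series_le_decay (fun n => sqmod_ge0 _) C_ge0 le_C.
Qed.

Lemma fdot_Heun N x y : poly_Bp p N x ->
  fdot (N + m) (Heun p m x) y = \sum_(0 <= k < N)
    x k * ((hup p m k)%:C * y (k + m)%N + (hdown p m k)%:C * y (k - m)%N)^*.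
Proof.
move=> [_ x0]; rewrite fdotE.
under eq_bigr => j _ do rewrite /Heun mulrDl.
rewrite big_split /=.
under [RHS]eq_bigr => k _ do rewrite conjcD !conjc_realM mulrDr.
rewrite [RHS]big_split /=; congr (_ + _).
  rewrite -big_nat_shift_vanish => [|j lt_jm]; last by rewrite leqNgt lt_jm mul0r.
  by apply: eq_bigr => k _; rewrite leq_addl addnK mulrCA mulrA.
transitivity (\sum_(0 <= i < N + m)
    (hdown p m (i + m))%:C * x (i + m)%N * Num.conj (y (i + m - m)%N)).
  by apply: eq_bigr => i _; rewrite addnK.
rewrite (big_nat_shift_vanish (fun k => (hdown p m k)%:C * x k * Num.conj (y (k - m)%N)));
  last by move=> k lt_km; rewrite hdown0 ?mul0r //; lia.
rewrite -addnA (big_nat_vanish_ge (leq_addr (m + m) N)).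
  by apply: eq_bigr => k _; rewrite mulrCA mulrA.
by move=> k le_Nk; rewrite x0 // mulr0 mul0r.
Qed.

Lemma adj_eigenspace_rec lam y : adj_eigenspace p m lam y -> heun_rec lam y.
Proof.
move=> [[_ y0] [_ adj]]; split=> // k le_pk.
pose x j : Cx := (j == k)%:R.
have x_poly : poly_Bp p k.+1 x by split=> j lt_j; rewrite /x; case: eqP => // ej; lia.
have := adj k.+1 x x_poly; rewrite fdot_Heun // fdotE.
rewrite !big_nat_delta ?addnS ?ltnS ?leq_addr // => /(congr1 Num.conj).
by rewrite !conjCK.
Qed.

Lemma rec_adj_eigenspace lam y : sqmod lam = 1 -> heun_rec lam y ->
  adj_eigenspace p m lam y.
Proof.
move=> lam1 rec_y; have y_l2 := heun_rec_l2 lam1 rec_y.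
case: rec_y => y0 rec_y.
split; first by split.
split.
  split=> [|k lt_kp]; last by rewrite y0 ?mulr0.
  rewrite /in_l2 (_ : (fun k => _) = fun k => sqmod (y k)) //.
  by apply/funext => k; rewrite sqmodM lam1 mul1r.
move=> N x [x0 xN]; rewrite fdot_Heun // fdotE.
rewrite (big_nat_vanish_ge (leq_addr m N)) => [|k le_Nk]; last by rewrite xN ?mul0r.
apply: eq_bigr => k _; case: (ltnP k p) => [lt_kp | le_pk]; first by rewrite x0 ?mul0r.
by rewrite rec_y.
Qed.

Lemma hupC_neq0 {k} : (p <= k)%N -> (hup p m k)%:C != 0 :> Cx.
Proof. by move=> le_pk; apply/eqP => -[/eqP]; rewrite gt_eqF ?hup_gt0. Qed.

(* The recurrence at k = n - m solved for y n, with prescribed values c on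
   [p, p + m); the fuel only bounds the recursion depth. *)
Fixpoint heun_sol_fuel (lam : Cx) (c : nat -> Cx) (fuel n : nat) : Cx :=
  if fuel is f.+1 then
    if (n < p)%N then 0 else if (n < p + m)%N then c (n - p)%N else
    let k := (n - m)%N in
    ((hup p m k)^-1)%:C *
      (lam * heun_sol_fuel lam c f k - (hdown p m k)%:C * heun_sol_fuel lam c f (k - m)%N)
  else 0.

Lemma heun_sol_fuel_eq lam c f g n : (n < f)%N -> (n < g)%N ->
  heun_sol_fuel lam c f n = heun_sol_fuel lam c g n.
Proof.
elim: f g n => [//|f IHf] [//|g] n lt_nf lt_ng /=.
case: ifP => // _; case: ltnP => // ge_n.
by rewrite !(IHf g) //; lia.
Qed.

Definition heun_sol lam c n := heun_sol_fuel lam c n.+1 n.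

Lemma heun_sol_fuelE lam c f n : (n < f)%N -> heun_sol_fuel lam c f n = heun_sol lam c n.
Proof. by move=> lt_nf; apply: heun_sol_fuel_eq. Qed.

Lemma heun_sol_step lam c n : (p + m <= n)%N -> heun_sol lam c n =
  ((hup p m (n - m))^-1)%:C *
    (lam * heun_sol lam c (n - m) - (hdown p m (n - m))%:C * heun_sol lam c (n - m - m)).
Proof.
move=> le_n; rewrite /heun_sol /= ltnNge (leq_trans (leq_addr m p) le_n) ltnNge le_n /=.
have e1 : heun_sol_fuel lam c n (n - m) = heun_sol lam c (n - m) by apply: heun_sol_fuelE; lia.
have e2 : heun_sol_fuel lam c n (n - m - m) = heun_sol lam c (n - m - m).
  by apply: heun_sol_fuelE; lia.
by rewrite e1 e2.
Qed.

Lemma heun_sol_rec lam c : heun_rec lam (heun_sol lam c).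
Proof.
split=> [k lt_kp | k le_pk]; first by rewrite /heun_sol /= lt_kp.
rewrite heun_sol_step ?leq_add2r // addnK mulrA -rmorphM mulfV ?gt_eqF ?hup_gt0 // mul1r.
by rewrite subrK.
Qed.

Lemma heun_sol_init lam c i : (i < m)%N -> heun_sol lam c (p + i) = c i.
Proof. by move=> lt_im; rewrite /heun_sol /= ltnNge leq_addr /= ltn_add2l lt_im addKn. Qed.

Lemma heun_rec_unique {lam y z} : heun_rec lam y -> heun_rec lam z ->
  (forall i, (i < m)%N -> y (p + i)%N = z (p + i)%N) -> y =1 z.
Proof.
move=> [y0 rec_y] [z0 rec_z] yz n; elim: n {-2}n (leqnn n) => [|N IHN] n le_nN.
  by rewrite (_ : n = 0)%N ?y0 ?z0 //; lia.
have [lt_np | le_pn] := ltnP n p; first by rewrite y0 ?z0.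
have [lt_n | le_n] := ltnP n (p + m); first by rewrite -(subnKC le_pn) yz //; lia.
have -> : n = (n - m + m)%N by lia.
have le_pk : (p <= n - m)%N by lia.
have IH1 : y (n - m)%N = z (n - m)%N by apply: IHN; lia.
have IH2 : y (n - m - m)%N = z (n - m - m)%N by apply: IHN; lia.
apply: (mulfI (hupC_neq0 le_pk)); apply: (addIr ((hdown p m (n - m))%:C * y (n - m - m)%N)).
by rewrite rec_y // IH2 rec_z // IH1.
Qed.

Lemma heun_rec_lincomb {lam d} {c : 'I_d -> Cx} {v : 'I_d -> cseq} :
  (forall i, heun_rec lam (v i)) -> heun_rec lam (fun k => \sum_(i < d) c i * v i k).
Proof.
move=> rec_v; split=> [k lt_kp | k le_pk].
  by apply: big1 => i _; case: (rec_v i) => v0 _; rewrite v0 ?mulr0.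
rewrite !mulr_sumr -big_split /=; apply: eq_bigr => i _.
by case: (rec_v i) => _ /(_ k le_pk) e; rewrite [RHS]mulrCA -e; ring.
Qed.

Lemma has_dim_heun_rec lam : has_dim [set y | heun_rec lam y]%classic m.
Proof.
pose v (i : 'I_m) := heun_sol lam (fun j => (j == i)%:R).
have v_init (i j : 'I_m) : v j (p + i)%N = (i == j)%:R by rewrite /v heun_sol_init.
have sum_v (c : 'I_m -> Cx) (i : 'I_m) : \sum_(j < m) c j * v j (p + i)%N = c i.
  by under eq_bigr => j _ do rewrite v_init; rewrite big_ord_delta.
exists v; split; [|split].
- by move=> i; apply: heun_sol_rec.
- by move=> c c0 i; rewrite -(sum_v c i) c0.
- move=> y rec_y; exists (fun i => y (p + i)%N) => k.
  apply: (heun_rec_unique rec_y (heun_rec_lincomb (fun i => heun_sol_rec _ _))) => i lt_im.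
  by rewrite (sum_v _ (Ordinal lt_im)).
Qed.

Lemma adj_eigenspaceE lam : sqmod lam = 1 ->
  adj_eigenspace p m lam = [set y | heun_rec lam y]%classic.
Proof.
move=> lam1; apply/seteqP; split=> y /=; first exact: adj_eigenspace_rec.
exact: rec_adj_eigenspace.
Qed.

End Heun.

Theorem theorem3p5 (p m : nat) (hp : (1 <= p)%N) (hm : (1 <= m)%N)
  (hpm : 1 < p%:R + m%:R / 2 :> Rdefinitions.R) :
  n_plus p m m /\ n_minus p m m.
Proof.
(* [hpm] is implied by [hp] and [hm]. *)
by split; rewrite /n_plus /n_minus adj_eigenspaceE ?sqmodN ?sqmod_i //; apply: has_dim_heun_rec.
Qed.
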